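(* Let $q\ge5$ be a prime power with $q\not\equiv0\pmod3$, and let $\mathfrak{A}$ be the null polarity $P(x_0,x_1,x_2,x_3)\mathfrak{A}=\boldsymbol{\pi}(x_3,-3x_2,3x_1,-x_0)$ of $\mathrm{PG}(3,q)$. Let $\ell$ be a line of $\mathrm{PG}(3,q)$ and $\ell'=\ell\mathfrak{A}$. Then the subgroup of $G_q$ fixing $\ell$ is also the subgroup of $G_q$ fixing $\ell'$.
   Context: $\boldsymbol{\pi}(c_0,c_1,c_2,c_3)$ denotes the plane $c_0x_0+c_1x_1+c_2x_2+c_3x_3=0$. The twisted cubic is $\mathcal{C}=\{P(t^3,t^2,t,1):t\in\mathbb{F}_q\}\cup\{P(1,0,0,0)\}$ and $G_q$ is the group of projectivities of $\mathrm{PG}(3,q)$ mapping $\mathcal{C}$ to itself. For a line $\ell$ through distinct points $P_1,P_2$, $\ell\mathfrak{A}$ is the line $P_1\mathfrak{A}\cap P_2\mathfrak{A}$. A subgroup fixes a line if each of its elements maps the line onto itself. *)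

From HB Require Import structures.
From mathcomp Require Import all_boot all_order all_algebra all_fingroup all_field.
Set Implicit Arguments. Unset Strict Implicit. Unset Printing Implicit Defensive.
Import GRing.Theory.
Local Open Scope ring_scope.

(* PG(3,q) over a finite field F with #|F| = q.  Points are nonzero row
   vectors of 'rV[F]_4 up to nonzero scalars: two nonzero vectors represent
   the same point iff their row spaces agree, (u == v)%MS.  Subspaces
   (lines, planes) are represented by matrices through their row spaces.
   A projectivity is induced by an invertible matrix A acting on row vectors
   v |-> v *m A. *)

Definition cubic_pt (F : fieldType) (t : F) : 'rV[F]_4 :=
  \row_(i < 4) t ^+ (3 - i).

Definition cubic_inf (F : fieldType) : 'rV[F]_4 :=
  \row_(i < 4) ((i : nat) == 0%N)%:R.

Definition on_cubic (F : fieldType) (v : 'rV[F]_4) : Prop :=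
  v != 0 /\ ((exists t : F, (v == cubic_pt t)%MS) \/ (v == cubic_inf F)%MS).

Definition in_Gq (F : fieldType) (A : 'M[F]_4) : Prop :=
  A \in unitmx /\ forall v : 'rV[F]_4, on_cubic v <-> on_cubic (v *m A).

(* Gram matrix of the null polarity: x *m nullJ is the coefficient vector
   (x3, -3 x2, 3 x1, -x0) of the plane P(x)A. *)
Definition nullJ (F : fieldType) : 'M[F]_4 :=
  \matrix_(i < 4, j < 4)
    (if ((i : nat) == 0%N) && ((j : nat) == 3%N) then -1
     else if ((i : nat) == 1%N) && ((j : nat) == 2%N) then 3%:R
     else if ((i : nat) == 2%N) && ((j : nat) == 1%N) then - 3%:R
     else if ((i : nat) == 3%N) && ((j : nat) == 0%N) then 1
     else 0).

Definition polar_plane (F : fieldType) (x : 'rV[F]_4) : 'M[F]_4 :=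
  kermx ((x *m nullJ F)^T).

Definition line_through (F : fieldType) (P1 P2 : 'rV[F]_4) : 'M[F]_4 :=
  (P1 + P2)%MS.

Definition polar_line (F : fieldType) (P1 P2 : 'rV[F]_4) : 'M[F]_4 :=
  (polar_plane P1 :&: polar_plane P2)%MS.

Definition fixes_sub (F : fieldType) (A L : 'M[F]_4) : bool :=
  (L *m A == L)%MS.

(* The null polarity is invariant under G_q.  For A in G_q the quadrics
   x1^2 - x0 x2, x2^2 - x1 x3, x1 x2 - x0 x3 cutting out the twisted cubic
   vanish on P(t)A for every t and on P(1,0,0,0)A.  As polynomials of degree
   six in t, their leading and constant coefficients therefore vanish, and
   since q >= 5 provides four distinct nonzero values of t, the three remaining
   quartics are multiples of one and the same quartic.  The linear syzygy among
   the three quadrics then says that A kills a vector made of their leading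
   coefficients, so all coefficients vanish, and explicit ideal-membership
   identities turn this into A J A^T = mu J for the Gram matrix J of the
   polarity.  As J is invertible when 3 does not divide q, A maps the polar of
   any subspace onto the polar of its image, so it fixes a line exactly when it
   fixes the polar line. *)

From HB Require Import structures.
From mathcomp Require Import all_boot all_order all_algebra all_fingroup all_field.
From mathcomp Require Import ring zify.
Set Implicit Arguments. Unset Strict Implicit. Unset Printing Implicit Defensive.
Import GRing.Theory.
Local Open Scope ring_scope.

Section Polarity.

Variables (F : fieldType) (n : nat) (J A : 'M[F]_n).
Hypotheses (J_unit : J \in unitmx) (A_unit : A \in unitmx).

Lemma sub_stablemx_unit m (X : 'M_(m, n)) : stablemx X A -> (X <= X *m A)%MS.
Proof.
move=> sXA_X; suff /andP[] : (X *m A == X)%MS by [].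
by rewrite -(mxrank_leqif_eq sXA_X).2 mxrankMfree ?row_free_unit.
Qed.

Lemma eqmx_stablemx_unit m (X : 'M_(m, n)) : (X *m A == X)%MS = stablemx X A.
Proof. by apply/andP/idP => [[] //| sXA_X]; rewrite sub_stablemx_unit. Qed.

Definition polar m (X : 'M_(m, n)) : 'M_n := kermx ((X *m J)^T).

Lemma mxrank_polar m (X : 'M_(m, n)) : \rank (polar X) = (n - \rank X)%N.
Proof. by rewrite mxrank_ker mxrank_tr mxrankMfree ?row_free_unit. Qed.

Lemma polar_col_mx m m1 m2 (X : 'M_(m1, n)) (Y : 'M_(m2, n)) (Z : 'M_(m, n)) :
  (Z <= polar (col_mx X Y))%MS = (Z <= polar X)%MS && (Z <= polar Y)%MS.
Proof. by rewrite !sub_kermx mul_col_mx tr_col_mx mul_mx_row row_mx_eq0. Qed.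

Lemma polarS m p (X : 'M_(m, n)) (Y : 'M_(p, n)) :
  (Y <= X)%MS -> (polar X <= polar Y)%MS.
Proof.
case/submxP=> D ->; rewrite sub_kermx -mulmxA trmx_mul mulmxA.
by rewrite mulmx_ker mul0mx.
Qed.

Lemma polarS_sub m p (X : 'M_(m, n)) (Y : 'M_(p, n)) :
  (polar X <= polar Y)%MS -> (Y <= X)%MS.
Proof.
move=> sXY; have sX_XY : (X <= col_mx X Y)%MS by rewrite -addsmxE addsmxSl.
have le_rk : (\rank (col_mx X Y) <= \rank X)%N.
  have := mxrankS (_ : polar X <= polar (col_mx X Y))%MS.
  rewrite polar_col_mx submx_refl sXY !mxrank_polar => /(_ isT).
  by have := rank_leq_col (col_mx X Y); have := mxrankS sX_XY; lia.
have sXY_X : (col_mx X Y <= X)%MS.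
  by rewrite -(mxrank_leqif_sup sX_XY).2 eqn_leq le_rk mxrankS.
by apply: submx_trans sXY_X; rewrite -addsmxE addsmxSr.
Qed.

Variable mu : F.
Hypothesis AJA : A *m J *m A^T = mu *: J.

Lemma form_invariant p m (Y : 'M_(p, n)) (X : 'M_(m, n)) :
  Y *m A *m (X *m A *m J)^T = mu *: (Y *m (X *m J)^T).
Proof.
have AJtA : A *m J^T *m A^T = mu *: J^T.
  by rewrite -mulmxA -[A in A *m _]trmxK -!trmx_mul AJA linearZ.
by rewrite !trmx_mul !mulmxA -(mulmxA Y) -(mulmxA Y) AJtA -scalemxAr -scalemxAl.
Qed.

Lemma polar_mulmx m (X : 'M_(m, n)) : (polar X *m A <= polar (X *m A))%MS.
Proof. by rewrite sub_kermx form_invariant mulmx_ker scaler0. Qed.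

Lemma stablemx_polar m (X : 'M_(m, n)) : stablemx X A = stablemx (polar X) A.
Proof.
apply/idP/idP => /sub_stablemx_unit sX_XA.
- exact: submx_trans (polar_mulmx X) (polarS sX_XA).
- exact/polarS_sub/(submx_trans sX_XA)/polar_mulmx.
Qed.

End Polarity.

Lemma poly_eq_coef_prod_XsubC (F : fieldType) (p : {poly F}) (s : seq F) :
  uniq s -> (size p <= (size s).+1)%N -> all (root p) s ->
  p = p`_(size s) *: \prod_(x <- s) ('X - x%:P).
Proof.
move=> uniq_s; rewrite leq_eqVlt ltnS => /orP[/eqP size_p | size_p] roots_p.
  by rewrite [LHS](all_roots_prod_XsubC size_p) ?uniq_rootsE // lead_coefE size_p.
have [-> | nz_p] := eqVneq p 0; first by rewrite coef0 scale0r.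
by have := max_poly_roots nz_p roots_p uniq_s; rewrite ltnNge size_p.
Qed.

Notation i0 := (@Ordinal 4 0 isT).
Notation i1 := (@Ordinal 4 1 isT).
Notation i2 := (@Ordinal 4 2 isT).
Notation i3 := (@Ordinal 4 3 isT).

Lemma ord4P (j : 'I_4) : [\/ j = i0, j = i1, j = i2 | j = i3].
Proof.
by case: j => [[|[|[|[|//]]]] ?]; [apply: Or41 | apply: Or42 | apply: Or43 | apply: Or44];
  apply: val_inj.
Qed.

Lemma sum4 (V : nmodType) (G : 'I_4 -> V) : \sum_i G i = G i0 + G i1 + G i2 + G i3.
Proof.
rewrite !big_ord_recl big_ord0 addr0 !addrA.
by congr (_ + _ + _ + _); congr G; apply: val_inj.
Qed.

Section TwistedCubic.

Variable F : fieldType.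
Implicit Types (A : 'M[F]_4) (v : 'rV[F]_4).

(* The 2x2 minors of [[x0, x1, x2], [x1, x2, x3]], up to sign. *)
Definition cubic_quadric (k : nat) v : F :=
  match k with
  | 0 => v 0 i1 * v 0 i1 - v 0 i0 * v 0 i2
  | 1 => v 0 i2 * v 0 i2 - v 0 i1 * v 0 i3
  | _ => v 0 i1 * v 0 i2 - v 0 i0 * v 0 i3
  end.

Lemma cubic_quadricZ k c v : cubic_quadric k (c *: v) = c ^+ 2 * cubic_quadric k v.
Proof. by case: k => [|[|k]]; rewrite /= !mxE; ring. Qed.

Lemma on_cubic_quadric k v : on_cubic v -> cubic_quadric k v = 0.
Proof.
case=> _ [[t /andP[/sub_rVP[c ->] _]] | /andP[/sub_rVP[c ->] _]];
  by rewrite cubic_quadricZ; case: k => [|[|k]]; rewrite /= !mxE /=; ring.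
Qed.

Lemma on_cubic_pt (t : F) : on_cubic (cubic_pt t).
Proof.
split; last by left; exists t; rewrite submx_refl.
by apply/eqP => /matrixP/(_ 0 i3); rewrite !mxE /= => /eqP; rewrite oner_eq0.
Qed.

Lemma on_cubic_inf : on_cubic (cubic_inf F).
Proof.
split; last by right; rewrite submx_refl.
by apply/eqP => /matrixP/(_ 0 i0); rewrite !mxE /= => /eqP; rewrite oner_eq0.
Qed.

(* [prod_coef A j l m] is the coefficient of t^(6-m) in the product of the
   j-th and l-th coordinates of P(t)A. *)
Definition prod_coef A (j l : 'I_4) (m : nat) : F :=
  match m with
  | 0 => A i0 j * A i0 l
  | 1 => A i0 j * A i1 l + A i1 j * A i0 l
  | 2 => A i0 j * A i2 l + A i1 j * A i1 l + A i2 j * A i0 l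
  | 3 => A i0 j * A i3 l + A i1 j * A i2 l + A i2 j * A i1 l + A i3 j * A i0 l
  | 4 => A i1 j * A i3 l + A i2 j * A i2 l + A i3 j * A i1 l
  | 5 => A i2 j * A i3 l + A i3 j * A i2 l
  | 6 => A i3 j * A i3 l
  | _ => 0
  end.

Definition quadric_coef A (k m : nat) : F :=
  match k with
  | 0 => prod_coef A i1 i1 m - prod_coef A i0 i2 m
  | 1 => prod_coef A i2 i2 m - prod_coef A i1 i3 m
  | _ => prod_coef A i1 i2 m - prod_coef A i0 i3 m
  end.

Lemma cubic_ptM A t j :
  (cubic_pt t *m A) 0 j = t ^+ 3 * A i0 j + t ^+ 2 * A i1 j + t * A i2 j + A i3 j.
Proof. by rewrite mxE sum4 !mxE /=; ring. Qed.

Lemma cubic_infM A j : (cubic_inf F *m A) 0 j = A i0 j.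
Proof. by rewrite mxE sum4 !mxE /=; ring. Qed.

Lemma quadric_cubic_ptM A k t :
  cubic_quadric k (cubic_pt t *m A) =
    quadric_coef A k 0 * t ^+ 6 + quadric_coef A k 1 * t ^+ 5 + quadric_coef A k 2 * t ^+ 4
    + quadric_coef A k 3 * t ^+ 3 + quadric_coef A k 4 * t ^+ 2 + quadric_coef A k 5 * t
    + quadric_coef A k 6.
Proof. by case: k => [|[|k]]; rewrite /= !cubic_ptM; ring. Qed.

Lemma quadric_cubic_infM A k : cubic_quadric k (cubic_inf F *m A) = quadric_coef A k 0.
Proof. by case: k => [|[|k]]; rewrite /= !cubic_infM; ring. Qed.

End TwistedCubic.

Definition null_form (F : fieldType) (A : 'M[F]_4) (i j : 'I_4) : F :=
  - (A i i0 * A j i3) + 3%:R * A i i1 * A j i2 - 3%:R * A i i2 * A j i1 + A i i3 * A j i0.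

Lemma null_formE (F : fieldType) (A : 'M[F]_4) i j :
  (A *m nullJ F *m A^T) i j = null_form A i j.
Proof. by rewrite mxE sum4 !mxE !sum4 !mxE /= /null_form; ring. Qed.

Lemma null_formC (F : fieldType) (A : 'M[F]_4) i j : null_form A j i = - null_form A i j.
Proof. by rewrite /null_form; ring. Qed.

Lemma null_form_diag (F : fieldType) (A : 'M[F]_4) i : null_form A i i = 0.
Proof. by rewrite /null_form; ring. Qed.

Lemma mul_row_eq0 (F : fieldType) n (A : 'M[F]_n) r k (g : F) :
  row r A != 0 -> (forall j, g * A r j ^+ k = 0) -> g = 0.
Proof.
move=> nz_r gA0; apply/eqP; apply: contraNT nz_r => nz_g; apply/eqP/rowP => j.
by move/eqP: (gA0 j); rewrite !mxE mulf_eq0 (negPf nz_g) expf_eq0 => /andP[_ /eqP].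
Qed.

Section NullFormIdeal.

Variables (F : fieldType) (A : 'M[F]_4).
Local Notation h := (quadric_coef A).
Local Notation w := (null_form A).

(* Each w i j times a power of an entry of row 0 or row 3 of A lies in the
   ideal generated by the coefficients h k m. *)
Lemma null_form01_cert :
  [/\ w i0 i1 * A i0 i0
      = 4%:R * A i1 i1 * h 0 0 - 2%:R * A i0 i1 * h 0 1 - 2%:R * A i1 i0 * h 2 0
        + A i0 i0 * h 2 1,
    w i0 i1 * A i0 i1
      = 3%:R * A i1 i2 * h 0 0 - A i0 i2 * h 0 1 - A i1 i0 * h 1 0 + A i0 i0 * h 1 1
        - A i1 i1 * h 2 0,
    w i0 i1 * A i0 i2
      = A i1 i3 * h 0 0 - A i0 i3 * h 0 1 - 3%:R * A i1 i1 * h 1 0 + A i0 i1 * h 1 1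
        + A i1 i2 * h 2 0
  & w i0 i1 * A i0 i3
      = - 4%:R * A i1 i2 * h 1 0 + 2%:R * A i0 i2 * h 1 1 + 2%:R * A i1 i3 * h 2 0
        - A i0 i3 * h 2 1].
Proof. by split; rewrite /quadric_coef /prod_coef /null_form /=; ring. Qed.

Lemma null_form23_cert :
  [/\ w i2 i3 * A i3 i0
      = 2%:R * A i3 i1 * h 0 5 - 4%:R * A i2 i1 * h 0 6 - A i3 i0 * h 2 5
        + 2%:R * A i2 i0 * h 2 6,
    w i2 i3 * A i3 i1
      = 2%:R * A i3 i2 * h 0 5 - 2%:R * A i2 i2 * h 0 6 + 2%:R * A i2 i0 * h 1 6
        - A i3 i1 * h 2 5,
    w i2 i3 * A i3 i2
      = - 2%:R * A i2 i3 * h 0 6 - 2%:R * A i3 i1 * h 1 5 + 2%:R * A i2 i1 * h 1 6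
        + A i3 i2 * h 2 5
  & w i2 i3 * A i3 i3
      = - 2%:R * A i3 i2 * h 1 5 + 4%:R * A i2 i2 * h 1 6 + A i3 i3 * h 2 5
        - 2%:R * A i2 i3 * h 2 6].
Proof. by split; rewrite /quadric_coef /prod_coef /null_form /=; ring. Qed.

Lemma null_form02_cert :
  [/\ w i0 i2 * A i0 i0 ^+ 2
      = 4%:R * A i0 i0 * A i2 i1 * h 0 0 - 2%:R * A i1 i0 * A i1 i1 * h 0 0
        + A i0 i0 * A i1 i1 * h 0 1 + A i0 i1 * A i1 i0 * h 0 1
        - 2%:R * A i0 i0 * A i0 i1 * h 0 2 - 2%:R * A i0 i0 * A i2 i0 * h 2 0
        + A i1 i0 * A i1 i0 * h 2 0 - A i0 i0 * A i1 i0 * h 2 1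
        + A i0 i0 * A i0 i0 * h 2 2,
    w i0 i2 * A i0 i1 ^+ 2
      = 3%:R * A i0 i1 * A i2 i2 * h 0 0 - 3%:R * A i0 i2 * A i2 i1 * h 0 0
        + A i0 i3 * A i2 i0 * h 0 0 - 2%:R * A i1 i1 * A i1 i2 * h 0 0
        + A i0 i1 * A i1 i2 * h 0 1 - A i0 i0 * A i0 i3 * h 0 2
        - 3%:R * A i0 i0 * A i2 i1 * h 1 0 - A i0 i0 * A i1 i1 * h 1 1
        + A i0 i0 * A i0 i1 * h 1 2 + A i0 i0 * A i2 i2 * h 2 0
        + A i1 i0 * A i1 i2 * h 2 0,
    w i0 i2 * A i0 i2 ^+ 2
      = 3%:R * A i0 i3 * A i2 i2 * h 0 0 + A i0 i3 * A i1 i2 * h 0 1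
        - A i0 i2 * A i0 i3 * h 0 2 - A i0 i0 * A i2 i3 * h 1 0
        + 3%:R * A i0 i1 * A i2 i2 * h 1 0 - 3%:R * A i0 i2 * A i2 i1 * h 1 0
        + 2%:R * A i1 i1 * A i1 i2 * h 1 0 - A i0 i2 * A i1 i1 * h 1 1
        + A i0 i0 * A i0 i3 * h 1 2 - A i0 i3 * A i2 i1 * h 2 0
        - A i1 i1 * A i1 i3 * h 2 0
  & w i0 i2 * A i0 i3 ^+ 2
      = - 4%:R * A i0 i3 * A i2 i2 * h 1 0 + 2%:R * A i1 i2 * A i1 i3 * h 1 0
        - A i0 i2 * A i1 i3 * h 1 1 - A i0 i3 * A i1 i2 * h 1 1
        + 2%:R * A i0 i2 * A i0 i3 * h 1 2 + 2%:R * A i0 i3 * A i2 i3 * h 2 0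
        - A i1 i3 * A i1 i3 * h 2 0 + A i0 i3 * A i1 i3 * h 2 1
        - A i0 i3 * A i0 i3 * h 2 2].
Proof. by split; rewrite /quadric_coef /prod_coef /null_form /=; ring. Qed.

Lemma null_form13_cert :
  [/\ w i1 i3 * A i3 i0 ^+ 2
      = 2%:R * A i3 i0 * A i3 i1 * h 0 4 - A i2 i0 * A i3 i1 * h 0 5
        - A i2 i1 * A i3 i0 * h 0 5 - 4%:R * A i1 i1 * A i3 i0 * h 0 6
        + 2%:R * A i2 i0 * A i2 i1 * h 0 6 - A i3 i0 * A i3 i0 * h 2 4
        + A i2 i0 * A i3 i0 * h 2 5 + 2%:R * A i1 i0 * A i3 i0 * h 2 6
        - A i2 i0 * A i2 i0 * h 2 6,
    w i1 i3 * A i3 i1 ^+ 2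
      = 2%:R * A i3 i1 * A i3 i2 * h 0 4 - A i2 i1 * A i3 i2 * h 0 5
        + A i1 i0 * A i3 i3 * h 0 6 - A i1 i1 * A i3 i2 * h 0 6
        - 3%:R * A i1 i2 * A i3 i1 * h 0 6 + A i1 i3 * A i3 i0 * h 0 6
        + A i2 i0 * A i2 i3 * h 0 6 + A i2 i0 * A i3 i1 * h 1 5
        + 2%:R * A i1 i0 * A i3 i1 * h 1 6 - A i2 i0 * A i2 i1 * h 1 6
        - A i3 i0 * A i3 i2 * h 2 4,
    w i1 i3 * A i3 i2 ^+ 2
      = - A i2 i3 * A i3 i2 * h 0 5 - 2%:R * A i1 i3 * A i3 i2 * h 0 6
        + A i2 i2 * A i2 i3 * h 0 6 - 2%:R * A i3 i1 * A i3 i2 * h 1 4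
        + A i2 i2 * A i3 i1 * h 1 5 - A i1 i0 * A i3 i3 * h 1 6
        + 3%:R * A i1 i1 * A i3 i2 * h 1 6 + A i1 i2 * A i3 i1 * h 1 6
        - A i1 i3 * A i3 i0 * h 1 6 - A i2 i0 * A i2 i3 * h 1 6
        + A i3 i1 * A i3 i3 * h 2 4
  & w i1 i3 * A i3 i3 ^+ 2
      = - 2%:R * A i3 i2 * A i3 i3 * h 1 4 + A i2 i2 * A i3 i3 * h 1 5
        + A i2 i3 * A i3 i2 * h 1 5 + 4%:R * A i1 i2 * A i3 i3 * h 1 6
        - 2%:R * A i2 i2 * A i2 i3 * h 1 6 + A i3 i3 * A i3 i3 * h 2 4
        - A i2 i3 * A i3 i3 * h 2 5 - 2%:R * A i1 i3 * A i3 i3 * h 2 6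
        + A i2 i3 * A i2 i3 * h 2 6].
Proof. by split; rewrite /quadric_coef /prod_coef /null_form /=; ring. Qed.

Lemma null_form12_cert :
  [/\ (w i1 i2 + 3%:R * w i0 i3) * A i0 i0
      = 12%:R * A i3 i1 * h 0 0 + 6%:R * A i2 i1 * h 0 1 - 6%:R * A i0 i1 * h 0 3
        - 6%:R * A i3 i0 * h 2 0 - 3%:R * A i2 i0 * h 2 1 + 3%:R * A i0 i0 * h 2 3
        - A i2 i0 * w i0 i1 - 2%:R * A i1 i0 * w i0 i2,
    (w i1 i2 + 3%:R * w i0 i3) * A i0 i1
      = 9%:R * A i3 i2 * h 0 0 + 5%:R * A i2 i2 * h 0 1 + A i1 i2 * h 0 2
        - 3%:R * A i0 i2 * h 0 3 - 3%:R * A i3 i0 * h 1 0 - A i2 i0 * h 1 1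
        + A i1 i0 * h 1 2 + 3%:R * A i0 i0 * h 1 3 - 3%:R * A i3 i1 * h 2 0
        - 2%:R * A i2 i1 * h 2 1 - A i1 i1 * h 2 2 - A i2 i1 * w i0 i1
        - 2%:R * A i1 i1 * w i0 i2,
    (w i1 i2 + 3%:R * w i0 i3) * A i0 i2
      = 3%:R * A i3 i3 * h 0 0 + A i2 i3 * h 0 1 - A i1 i3 * h 0 2
        - 3%:R * A i0 i3 * h 0 3 - 9%:R * A i3 i1 * h 1 0 - 5%:R * A i2 i1 * h 1 1
        - A i1 i1 * h 1 2 + 3%:R * A i0 i1 * h 1 3 + 3%:R * A i3 i2 * h 2 0
        + 2%:R * A i2 i2 * h 2 1 + A i1 i2 * h 2 2 - A i2 i2 * w i0 i1
        - 2%:R * A i1 i2 * w i0 i2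
  & (w i1 i2 + 3%:R * w i0 i3) * A i0 i3
      = - 12%:R * A i3 i2 * h 1 0 - 6%:R * A i2 i2 * h 1 1 + 6%:R * A i0 i2 * h 1 3
        + 6%:R * A i3 i3 * h 2 0 + 3%:R * A i2 i3 * h 2 1 - 3%:R * A i0 i3 * h 2 3
        - A i2 i3 * w i0 i1 - 2%:R * A i1 i3 * w i0 i2].
Proof. by split; rewrite /quadric_coef /prod_coef /null_form /=; ring. Qed.

Hypotheses (h_eq0 : forall k m, h k m = 0) (nz_row0 : row i0 A != 0)
  (nz_row3 : row i3 A != 0).

Lemma null_form_relations :
  [/\ w i0 i1 = 0, w i2 i3 = 0, w i0 i2 = 0, w i1 i3 = 0 & w i1 i2 = - (3%:R * w i0 i3)].
Proof.
have w01 : w i0 i1 = 0.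
  apply: (mul_row_eq0 (k := 1) nz_row0) => j; have [c0 c1 c2 c3] := null_form01_cert.
  by case: (ord4P j) => ->; rewrite expr1 ?c0 ?c1 ?c2 ?c3 !h_eq0; ring.
have w23 : w i2 i3 = 0.
  apply: (mul_row_eq0 (k := 1) nz_row3) => j; have [c0 c1 c2 c3] := null_form23_cert.
  by case: (ord4P j) => ->; rewrite expr1 ?c0 ?c1 ?c2 ?c3 !h_eq0; ring.
have w02 : w i0 i2 = 0.
  apply: (mul_row_eq0 (k := 2) nz_row0) => j; have [c0 c1 c2 c3] := null_form02_cert.
  by case: (ord4P j) => ->; rewrite ?c0 ?c1 ?c2 ?c3 !h_eq0; ring.
have w13 : w i1 i3 = 0.
  apply: (mul_row_eq0 (k := 2) nz_row3) => j; have [c0 c1 c2 c3] := null_form13_cert.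
  by case: (ord4P j) => ->; rewrite ?c0 ?c1 ?c2 ?c3 !h_eq0; ring.
suff w12 : w i1 i2 + 3%:R * w i0 i3 = 0 by split => //; apply/eqP; rewrite -addr_eq0 w12.
apply: (mul_row_eq0 (k := 1) nz_row0) => j; have [c0 c1 c2 c3] := null_form12_cert.
by case: (ord4P j) => ->; rewrite expr1 ?c0 ?c1 ?c2 ?c3 !h_eq0 w01 w02; ring.
Qed.

Lemma null_form_scalar : A *m nullJ F *m A^T = (- w i0 i3) *: nullJ F.
Proof.
have [w01 w23 w02 w13 w12] := null_form_relations.
apply/matrixP => i j; rewrite null_formE !mxE.
by case: (ord4P i) => ->; case: (ord4P j) => -> /=;
  rewrite ?null_form_diag ?[w i1 i0]null_formC ?[w i2 i0]null_formC
    ?[w i3 i0]null_formC ?[w i2 i1]null_formC ?[w i3 i1]null_formC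
    ?[w i3 i2]null_formC ?w01 ?w23 ?w02 ?w13 ?w12; ring.
Qed.

End NullFormIdeal.

Section CubicImage.

Variables (F : fieldType) (A : 'M[F]_4).
Local Notation h := (quadric_coef A).

Definition syz_coef (i : 'I_4) (m : nat) : F :=
  A i i2 * h 0 m - A i i1 * h 2 m + A i i0 * h 1 m.

(* Coefficients of the syzygy x2 Q0(x) - x1 Q2(x) + x0 Q1(x) = 0 at x = P(t)A. *)
Lemma cubic_syzygy_coef :
  [/\ syz_coef i0 1 + syz_coef i1 0 = 0,
      syz_coef i0 2 + syz_coef i1 1 + syz_coef i2 0 = 0,
      syz_coef i0 3 + syz_coef i1 2 + syz_coef i2 1 + syz_coef i3 0 = 0
    & syz_coef i0 4 + syz_coef i1 3 + syz_coef i2 2 + syz_coef i3 1 = 0].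
Proof. by split; rewrite /syz_coef /quadric_coef /prod_coef /=; ring. Qed.

Lemma syz_coef1_eq0 (c : nat -> F) :
  (forall k, h k 0 = 0) -> (forall k m, (1 < m < 5)%N -> h k m = h k 1 * c m) ->
  forall i, syz_coef i 1 = 0.
Proof.
move=> h0_eq0 hc.
have s0 i : syz_coef i 0 = 0 by rewrite /syz_coef !h0_eq0; ring.
have sc i m : (1 < m < 5)%N -> syz_coef i m = syz_coef i 1 * c m.
  by move=> m_gt1; rewrite /syz_coef !(hc _ m) //; ring.
have [e1 e2 e3 e4] := cubic_syzygy_coef.
have s01 : syz_coef i0 1 = 0 by rewrite -e1 s0 addr0.
have s11 : syz_coef i1 1 = 0 by rewrite -e2 (sc _ 2) // s01 s0; ring.
have s21 : syz_coef i2 1 = 0 by rewrite -e3 (sc _ 3) // (sc _ 2) // s01 s11 s0; ring.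
have s31 : syz_coef i3 1 = 0.
  by rewrite -e4 (sc _ 4) // (sc _ 3) // (sc _ 2) // s01 s11 s21; ring.
by move=> i; case: (ord4P i) => ->.
Qed.

Lemma syz_coef1_mulmx i :
  syz_coef i 1 = (A *m \col_j [:: h 1 1; - h 2 1; h 0 1; 0]`_j) i 0.
Proof. by rewrite /syz_coef mxE sum4 !mxE /=; ring. Qed.

Lemma quadric_coef1_eq0 :
  A \in unitmx -> (forall i, syz_coef i 1 = 0) -> forall k, h k 1 = 0.
Proof.
move=> A_unit syz0; pose v : 'cV_4 := \col_j [:: h 1 1; - h 2 1; h 0 1; 0]`_j.
have Av0 : A *m v = 0 by apply/colP => i; rewrite -syz_coef1_mulmx syz0 mxE.
have /colP v0 : v = 0 by rewrite -(mulKmx A_unit v) Av0 mulmx0.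
case=> [|[|k]]; [move: (v0 i2) | move: (v0 i0) | move: (v0 i1)]; rewrite !mxE //=.
by move/eqP; rewrite oppr_eq0 => /eqP.
Qed.

Variable s : seq F.
Hypotheses (uniq_0s : uniq (0 :: s)) (size_s : size s = 4%N).
Hypotheses (h0_eq0 : forall k, h k 0 = 0)
  (on_quadric : forall k t, cubic_quadric k (cubic_pt t *m A) = 0).

Lemma quadric_coef6 k : h k 6 = 0.
Proof. by rewrite -(on_quadric k 0) quadric_cubic_ptM; ring. Qed.

Lemma quadric_coef_proportional :
  exists c : nat -> F, forall k m, (1 < m < 6)%N -> h k m = h k 1 * c m.
Proof.
exists (fun m => (\prod_(x <- s) ('X - x%:P))`_(5 - m)) => k m m_gt1.
pose R := Poly [:: h k 5; h k 4; h k 3; h k 2; h k 1].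
have [s0 uniq_s] := andP uniq_0s.
have roots_R : all (root R) s.
  apply/allP => x xs; have nz_x : x != 0 by apply: contraNneq s0 => <-.
  apply/eqP/(mulfI nz_x); rewrite mulr0 -(on_quadric k x) quadric_cubic_ptM.
  by rewrite h0_eq0 quadric_coef6 horner_Poly /=; ring.
have size_R : (size R <= (size s).+1)%N by rewrite size_s (leq_trans (size_Poly _)).
have eqR := poly_eq_coef_prod_XsubC uniq_s size_R roots_R.
have coefR i : R`_i = h k 1 * (\prod_(x <- s) ('X - x%:P))`_i.
  by rewrite {1}eqR coefZ size_s coef_Poly.
by case: m m_gt1 => [|[|[|[|[|[|m]]]]]] // _; rewrite -coefR coef_Poly.
Qed.

Lemma quadric_coef_eq0 : A \in unitmx -> forall k m, h k m = 0.
Proof.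
move=> A_unit k m; have [c hc] := quadric_coef_proportional.
have h1 k' : h k' 1 = 0.
  apply: quadric_coef1_eq0 => //; apply: (syz_coef1_eq0 (c := c) h0_eq0).
  by move=> ? m' /andP[m_gt1 m_lt5]; rewrite hc // m_gt1 ltnS ltnW.
case: m => [|[|m]]; [exact: h0_eq0 | exact: h1 |].
have [m_lt4 | m_ge4] := ltnP m 4; first by rewrite hc ?h1 ?mul0r.
case: m m_ge4 => [|[|[|[|[|m]]]]] // _; first exact: quadric_coef6.
by case: k => [|[|k]]; rewrite /quadric_coef /= subrr.
Qed.

End CubicImage.

Lemma exists_nonzero_seq (F : finFieldType) n :
  (n < #|F|)%N -> exists s : seq F, uniq (0 :: s) /\ size s = n.
Proof.
move=> n_lt; exists (take n (enum (predC1 (0 : F)))); split.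
  rewrite /= take_uniq ?enum_uniq // andbT.
  by apply/negP => /mem_take; rewrite mem_enum inE eqxx.
by rewrite size_takel // -cardE cardC1 -ltnS (ltn_predK n_lt).
Qed.

Lemma natr3_neq0 (F : finFieldType) : ~~ (3 %| #|F|)%N -> (3%:R : F) != 0.
Proof.
apply: contraNN => /eqP F3; have pchar3 : 3%N \in [pchar F] by rewrite inE /= F3 eqxx.
have := finNzRing_gt1 F; rewrite (card_pprimeChar pchar3).
by case: (logn 3 #|F|) => // k _; rewrite expnS dvdn_mulr.
Qed.

Lemma nullJ_unit (F : fieldType) : (3%:R : F) != 0 -> nullJ F \in unitmx.
Proof.
(* J is antidiagonal, so its inverse is its transpose with inverted entries. *)
move=> nz3; have /mulmx1_unit[] // : nullJ F *m map_mx GRing.inv (nullJ F)^T = 1%:M.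
apply/matrixP => i j; rewrite mxE sum4 !mxE.
by case: (ord4P i) => ->; case: (ord4P j) => -> /=; rewrite ?invr0; field;
  rewrite ?oppr_eq0 ?oner_eq0.
Qed.

Lemma row_unit_neq0 (F : fieldType) n (A : 'M[F]_n) r : A \in unitmx -> row r A != 0.
Proof.
move=> A_unit; rewrite rowE mulmx_free_eq0 ?row_free_unit //.
by apply/eqP => /matrixP/(_ 0 r); rewrite !mxE !eqxx => /eqP; rewrite oner_eq0.
Qed.

Section Gq.

Variables (F : fieldType) (A : 'M[F]_4).
Hypothesis GA : in_Gq A.

Lemma in_Gq_quadric k t : cubic_quadric k (cubic_pt t *m A) = 0.
Proof. exact/on_cubic_quadric/(GA.2 _).1/on_cubic_pt. Qed.

Lemma in_Gq_quadric_coef0 k : quadric_coef A k 0 = 0.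
Proof. by rewrite -quadric_cubic_infM; exact/on_cubic_quadric/(GA.2 _).1/on_cubic_inf. Qed.

End Gq.

Lemma Gq_null_polarity (F : finFieldType) (A : 'M[F]_4) :
  (5 <= #|F|)%N -> in_Gq A -> A *m nullJ F *m A^T = (- null_form A i0 i3) *: nullJ F.
Proof.
move=> F5 GA; have [A_unit _] := GA; have [s [uniq_0s size_s]] := exists_nonzero_seq F5.
apply: null_form_scalar; rewrite ?row_unit_neq0 //.
exact: quadric_coef_eq0 uniq_0s size_s (in_Gq_quadric_coef0 GA) (in_Gq_quadric GA) A_unit.
Qed.

Unset Implicit Arguments.

Theorem lemma4p3 (F : finFieldType) (P1 P2 : 'rV[F]_4) :
  (5 <= #|F|)%N -> ~~ (3 %| #|F|)%N ->
  P1 != 0 -> P2 != 0 -> ~~ (P1 == P2)%MS ->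
  forall A : 'M[F]_4, in_Gq A ->
    (fixes_sub A (line_through P1 P2) <-> fixes_sub A (polar_line P1 P2)).
Proof.
move=> F5 F3 _ _ _ A GA; have A_unit := GA.1.
have J_unit := nullJ_unit (natr3_neq0 F3).
pose S := col_mx P1 P2.
have eqL : (line_through P1 P2 :=: S)%MS := addsmxE P1 P2.
have eqL' : (polar_line P1 P2 :=: polar (nullJ F) S)%MS.
  apply/eqmxP; rewrite polar_col_mx capmxSl capmxSr sub_capmx.
  by rewrite -!(polar_col_mx _ P1 P2) submx_refl.
rewrite /fixes_sub !eqmx_stablemx_unit // (eqmx_stable _ eqL) (eqmx_stable _ eqL').
by rewrite (stablemx_polar J_unit A_unit (Gq_null_polarity F5 GA)).
Qed.
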